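(* Let $\mathcal{H}$ be an $n$-dimensional (real or complex) Hilbert space, let $F=\{f_i\}_{i=1}^N$ be a tight frame for $\mathcal{H}$, and let $\{q_i\}_{i=1}^N$ be the weight number sequence associated with a probability sequence $\{p_i\}_{i=1}^N$. Then $(F,S_F^{-1}F)$ is a 1-erasure POD-pair if and only if $(F,S_F^{-1}F)\in\zeta_P^{(1)}$.
   Context: A finite sequence $F=\{f_i\}_{i=1}^N$ in $\mathcal{H}$ is a frame if there are $A,B>0$ with $A\|f\|^2\le\sum_{i=1}^N|\langle f,f_i\rangle|^2\le B\|f\|^2$ for all $f$; it is tight if one can take $A=B$. The frame operator is $S_Ff=\sum_i\langle f,f_i\rangle f_i$; canonical dual $S_F^{-1}F=\{S_F^{-1}f_i\}_{i=1}^N$. A frame $G=\{g_i\}_{i=1}^N$ is a dual of $F$ if $f=\sum_i\langle f,f_i\rangle g_i=\sum_i\langle f,g_i\rangle f_i$ for all $f$; then $(F,G)$ is an $(N,n)$ dual pair. A probability sequence is $\{p_i\}_{i=1}^N$ with $0\le p_i\le1$, $\sum p_i=1$; weight numbers $q_i=\frac{\sum_{j} p_j}{\sum_{j} p_j-p_i}\cdot\frac{N-1}{n}$. For $\Lambda\subseteq\{1,\dots,N\}$ the error operator is $E_{\Lambda,(F,G)}f=\sum_{i\in\Lambda}q_i\langle f,f_i\rangle g_i$. Let $\mathcal{O}_P^{(1)}(F,G)=\max_{|\Lambda|=1}\|E_{\Lambda,(F,G)}\|$ and $\mathcal{A}_P^{(1)}(F,G)=\max_{|\Lambda|=1}\frac{\|E_{\Lambda,(F,G)}\|+\rho(E_{\Lambda,(F,G)})}{2}$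 ($\rho$ = spectral radius); let $\mathcal{O}_P^{(1)}$ and $\mathcal{A}_P^{(1)}$ be their infima over all $(N,n)$ dual pairs in $\mathcal{H}$. A dual pair is a 1-erasure POD-pair if $\mathcal{O}_P^{(1)}(F,G)=\mathcal{O}_P^{(1)}$, and a 1-erasure PASOD-pair if $\mathcal{A}_P^{(1)}(F,G)=\mathcal{A}_P^{(1)}$; $\zeta_P^{(1)}$ is the set of 1-erasure PASOD-pairs. *)

From HB Require Import structures.
From mathcomp Require Import all_boot all_order all_algebra.
From mathcomp Require Import complex.
From mathcomp Require Import boolp classical_sets reals.

Set Implicit Arguments.
Unset Strict Implicit.
Unset Printing Implicit Defensive.

Import Order.TTheory GRing.Theory Num.Theory.
Local Open Scope ring_scope.
Local Open Scope classical_set_scope.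

(* The n-dimensional Hilbert space H is modelled inside 'cV[R[i]]_n:
   - complex case (isreal = false): H = C^n (all column vectors);
   - real case   (isreal = true) : H = R^n = vectors with real entries. *)

Section FrameDefs.
Variable R : realType.

Definition cmod (z : R[i]) : R := Num.sqrt (complex.Re z ^+ 2 + complex.Im z ^+ 2).

Definition inH (isreal : bool) n (v : 'cV[R[i]]_n) : Prop :=
  isreal -> forall k, complex.Im (v k ord0) = 0.

Definition dotp n (u v : 'cV[R[i]]_n) : R[i] :=
  \sum_(k < n) u k ord0 * conjc (v k ord0).

Definition vnorm n (v : 'cV[R[i]]_n) : R :=
  Num.sqrt (\sum_(k < n) cmod (v k ord0) ^+ 2).

Definition adjv n (v : 'cV[R[i]]_n) : 'rV[R[i]]_n := map_mx conjc v^T.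

Definition frame_sum n N (F : 'I_N -> 'cV[R[i]]_n) (f : 'cV[R[i]]_n) : R :=
  \sum_(i < N) cmod (dotp f (F i)) ^+ 2.

Definition is_frame (isreal : bool) n N (F : 'I_N -> 'cV[R[i]]_n) : Prop :=
  (forall i, inH isreal (F i)) /\
  exists A B : R, 0 < A /\ 0 < B /\
    forall f, inH isreal f ->
      A * vnorm f ^+ 2 <= frame_sum F f /\ frame_sum F f <= B * vnorm f ^+ 2.

Definition is_tight_frame (isreal : bool) n N (F : 'I_N -> 'cV[R[i]]_n) : Prop :=
  (forall i, inH isreal (F i)) /\
  exists A : R, 0 < A /\
    forall f, inH isreal f ->
      A * vnorm f ^+ 2 <= frame_sum F f /\ frame_sum F f <= A * vnorm f ^+ 2.

Definition frame_op n N (F : 'I_N -> 'cV[R[i]]_n) : 'M[R[i]]_n :=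
  \sum_(i < N) (F i *m adjv (F i)).

Definition canon_dual n N (F : 'I_N -> 'cV[R[i]]_n) : 'I_N -> 'cV[R[i]]_n :=
  fun i => invmx (frame_op F) *m F i.

Definition is_dual_pair (isreal : bool) n N (F G : 'I_N -> 'cV[R[i]]_n) : Prop :=
  is_frame isreal F /\ is_frame isreal G /\
  forall f, inH isreal f ->
    f = \sum_(i < N) dotp f (F i) *: G i /\ f = \sum_(i < N) dotp f (G i) *: F i.

Definition is_prob_seq N (p : 'I_N -> R) : Prop :=
  (forall i, 0 <= p i /\ p i <= 1) /\ \sum_(i < N) p i = 1.

Definition weight n N (p : 'I_N -> R) (i : 'I_N) : R :=
  (\sum_(j < N) p j) / (\sum_(j < N) p j - p i) * ((N%:R - 1) / n%:R).

Definition err_op n N (q : 'I_N -> R) (F G : 'I_N -> 'cV[R[i]]_n)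
  (L : {set 'I_N}) : 'M[R[i]]_n :=
  \sum_(i in L) ((q i)%:C)%C *: (G i *m adjv (F i)).

Definition opnorm (isreal : bool) n (T : 'M[R[i]]_n) : R :=
  sup [set vnorm (T *m f) | f in [set f | inH isreal f /\ vnorm f = 1]].

(* spectral radius: largest modulus of an eigenvalue (over C, i.e. of the
   complexification in the real case) *)
Definition specrad n (T : 'M[R[i]]_n) : R :=
  sup [set cmod l | l in [set l | exists v : 'cV[R[i]]_n, v != 0 /\ T *m v = l *: v]].

Definition O1 (isreal : bool) n N (q : 'I_N -> R) (F G : 'I_N -> 'cV[R[i]]_n) : R :=
  \big[Num.max/0]_(L : {set 'I_N} | #|L| == 1%N) opnorm isreal (err_op q F G L).

Definition A1 (isreal : bool) n N (q : 'I_N -> R) (F G : 'I_N -> 'cV[R[i]]_n) : R :=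
  \big[Num.max/0]_(L : {set 'I_N} | #|L| == 1%N)
     ((opnorm isreal (err_op q F G L) + specrad (err_op q F G L)) / 2).

Definition dual_pairs (isreal : bool) n N :
  set (('I_N -> 'cV[R[i]]_n) * ('I_N -> 'cV[R[i]]_n)) :=
  [set FG | is_dual_pair isreal FG.1 FG.2].

Definition O1_opt (isreal : bool) (n N : nat) (q : 'I_N -> R) : R :=
  inf [set O1 isreal q FG.1 FG.2 | FG in @dual_pairs isreal n N].

Definition A1_opt (isreal : bool) (n N : nat) (q : 'I_N -> R) : R :=
  inf [set A1 isreal q FG.1 FG.2 | FG in @dual_pairs isreal n N].

Definition is_POD1 (isreal : bool) n N (q : 'I_N -> R) (F G : 'I_N -> 'cV[R[i]]_n) : Prop :=
  is_dual_pair isreal F G /\ O1 isreal q F G = @O1_opt isreal n N q.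

Definition is_PASOD1 (isreal : bool) n N (q : 'I_N -> R) (F G : 'I_N -> 'cV[R[i]]_n) : Prop :=
  is_dual_pair isreal F G /\ A1 isreal q F G = @A1_opt isreal n N q.

Definition zeta1 (isreal : bool) n N (q : 'I_N -> R) :
  set (('I_N -> 'cV[R[i]]_n) * ('I_N -> 'cV[R[i]]_n)) :=
  [set FG | is_PASOD1 isreal q FG.1 FG.2].

End FrameDefs.

(* For a dual pair (F, G) the error operator of the erasure {i} is the rank-one operator
   q_i g_i f_i^*, whose only possible nonzero eigenvalue is q_i <g_i, f_i>.  So its spectral
   radius never exceeds its norm and A(F, G) <= O(F, G) for every dual pair; it suffices to find
   a value c that bounds A from below on all dual pairs, is attained by O on some dual pair, and
   such that A(F, S^-1 F) <= c forces O(F, S^-1 F) <= c: then both optima equal c.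
   For N > n take c = 1.  Since sum_i 1/q_i = n = tr (sum_i g_i f_i^* ) = sum_i <g_i, f_i>,
   some q_i |<g_i, f_i>| is at least 1, and A <= 1 forces q_i |<g_i, f_i>| = 1 for every i,
   whence every error norm is at most 1; a real Parseval frame with |h_i|^2 = 1/q_i, obtained by
   repeatedly splitting squared norms with plane rotations, attains O = 1.
   For N = n dual frames are biorthogonal and c = max_i q_i, the upper bound for a tight frame
   with bound A coming from A |g_i|^2 = 1.  For n = 0 everything vanishes. *)

From HB Require Import structures.
From mathcomp Require Import all_boot all_order all_algebra.
From mathcomp Require Import complex.
From mathcomp Require Import boolp classical_sets reals.
From mathcomp Require Import ring lra.
Import Order.TTheory GRing.Theory Num.Theory.
Local Open Scope ring_scope.
Local Open Scope classical_set_scope.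
Local Open Scope complex_scope.

Set Implicit Arguments.
Unset Strict Implicit.

Section InnerProduct.
Variables (R : realType) (n : nat).
Local Notation C := R[i].
Implicit Types (z : C) (x : R) (u v w : 'cV[C]_n).

Lemma cmodE z : (cmod z)%:C = `|z|.
Proof. by rewrite normc_def. Qed.

Lemma cmod_ge0 z : 0 <= cmod z.
Proof. exact: sqrtr_ge0. Qed.

Lemma sqr_cmod z : ((cmod z) ^+ 2)%:C = z * conjc z.
Proof. by rewrite rmorphXn /= cmodE normCK. Qed.

Lemma cmodM z (z' : C) : cmod (z * z') = cmod z * cmod z'.
Proof. by apply: (@complexI R); rewrite rmorphM /= !cmodE normrM. Qed.

Lemma cmodR x : cmod x%:C = `|x|.
Proof. by apply: (@complexI R); rewrite cmodE normc_def /= expr0n /= addr0 sqrtr_sqr. Qed.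

Lemma cmod0 : cmod (0 : C) = 0.
Proof. by rewrite cmodR normr0. Qed.

Lemma cmod_nat k : cmod (k%:R : C) = k%:R.
Proof. by rewrite -(rmorph_nat (@real_complex R)) cmodR ger0_norm. Qed.

Lemma cmod_sum I (r : seq I) (P : pred I) (F : I -> C) :
  cmod (\sum_(i <- r | P i) F i) <= \sum_(i <- r | P i) cmod (F i).
Proof.
rewrite -lecR cmodE rmorph_sum [X in _ <= X](eq_bigr (fun i => `|F i|)) ?ler_norm_sum //.
by move=> i _; apply: cmodE.
Qed.

Lemma sqr_vnorm v : vnorm v ^+ 2 = \sum_(k < n) cmod (v k ord0) ^+ 2.
Proof. by rewrite sqr_sqrtr // sumr_ge0 // => k _; rewrite sqr_ge0. Qed.

Lemma vnorm_ge0 v : 0 <= vnorm v.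
Proof. exact: sqrtr_ge0. Qed.

Lemma dotpvv v : dotp v v = (vnorm v ^+ 2)%:C.
Proof. by rewrite sqr_vnorm rmorph_sum; apply: eq_bigr => k _; rewrite -sqr_cmod. Qed.

Lemma dotpJ u v : conjc (dotp u v) = dotp v u.
Proof.
rewrite /dotp rmorph_sum; apply: eq_bigr => k _.
by rewrite rmorphM /= conjcK mulrC.
Qed.

Lemma dotpDl u v w : dotp (u + v) w = dotp u w + dotp v w.
Proof. by rewrite /dotp -big_split; apply: eq_bigr => k _; rewrite !mxE mulrDl. Qed.

Lemma dotpZl z u w : dotp (z *: u) w = z * dotp u w.
Proof. by rewrite /dotp mulr_sumr; apply: eq_bigr => k _; rewrite !mxE mulrA. Qed.

Lemma dotpNl u w : dotp (- u) w = - dotp u w.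
Proof. by rewrite -scaleN1r dotpZl mulN1r. Qed.

Lemma dotp0l w : dotp 0 w = 0.
Proof. by rewrite -(scale0r 0) dotpZl mul0r. Qed.

Lemma dotp_suml I (r : seq I) (P : pred I) (F : I -> 'cV[C]_n) w :
  dotp (\sum_(i <- r | P i) F i) w = \sum_(i <- r | P i) dotp (F i) w.
Proof.
rewrite /dotp exchange_big /=; apply: eq_bigr => k _.
by rewrite summxE mulr_suml.
Qed.

Lemma dotpDr u v w : dotp w (u + v) = dotp w u + dotp w v.
Proof. by rewrite -dotpJ dotpDl rmorphD /= !dotpJ. Qed.

Lemma dotpZr z u w : dotp w (z *: u) = conjc z * dotp w u.
Proof. by rewrite -dotpJ dotpZl rmorphM /= !dotpJ. Qed.

Lemma dotpNr u w : dotp w (- u) = - dotp w u.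
Proof. by rewrite -dotpJ dotpNl rmorphN /= dotpJ. Qed.

Lemma dotp0r w : dotp w 0 = 0.
Proof. by rewrite -dotpJ dotp0l rmorph0. Qed.

Lemma vnormZ z v : vnorm (z *: v) = cmod z * vnorm v.
Proof.
apply: (@pexpIrn _ 2) => //; rewrite ?nnegrE ?mulr_ge0 ?cmod_ge0 ?vnorm_ge0 //.
rewrite exprMn !sqr_vnorm mulr_sumr; apply: eq_bigr => k _.
by rewrite mxE cmodM exprMn.
Qed.

Lemma vnorm0 : vnorm (0 : 'cV[C]_n) = 0.
Proof. by rewrite -(scale0r 0) vnormZ cmod0 mul0r. Qed.

Lemma vnorm_eq0 v : (vnorm v == 0) = (v == 0).
Proof.
apply/idP/idP => [|/eqP ->]; last by rewrite vnorm0.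
rewrite -sqrf_eq0 sqr_vnorm psumr_eq0 => [/allP v0|k _]; last exact: sqr_ge0.
apply/eqP/matrixP => k j; rewrite (ord1 j) mxE.
have /v0 : k \in index_enum 'I_n by rewrite mem_index_enum.
by rewrite /= sqrf_eq0 => /eqP c0; apply/eqP; rewrite -normr_eq0 -cmodE c0.
Qed.

Lemma cmod_dotp_le u v : cmod (dotp u v) <= vnorm u * vnorm v.
Proof.
have [->|v0] := eqVneq v 0; first by rewrite dotp0r cmod0 mulr_ge0 ?vnorm_ge0.
have vv_gt0 : 0 < dotp v v by rewrite dotpvv ltcR exprn_gt0 // lt_def vnorm_eq0 v0 vnorm_ge0.
rewrite -(@ler_pXn2r _ 2) ?nnegrE ?mulr_ge0 ?cmod_ge0 ?vnorm_ge0 //.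
rewrite -lecR exprMn sqr_cmod dotpJ.
have -> : (vnorm u ^+ 2 * vnorm v ^+ 2)%:C = dotp u u * dotp v v.
  by rewrite !dotpvv; apply: rmorphM.
(* expand 0 <= <u - t v, u - t v> for the projection coefficient t = <u,v>/<v,v> *)
set t := dotp u v / dotp v v.
have tJ : conjc t = dotp v u / dotp v v.
  by rewrite /t rmorphM /= dotpJ conjc_inv dotpvv conjc_real.
have : 0 <= dotp (u - t *: v) (u - t *: v) by rewrite dotpvv lecR sqr_ge0.
rewrite dotpDl !dotpDr !dotpNl !dotpNr !dotpZl !dotpZr tJ /t.
have vv_neq0 : dotp v v != 0 by rewrite gt_eqF.
rewrite -[X in 0 <= X]
  (_ : (dotp u u * dotp v v - dotp u v * dotp v u) / dotp v v = _); last by field.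
by rewrite pmulr_lge0 ?invr_gt0 // subr_ge0.
Qed.

End InnerProduct.

Section RealSup.
Variable R : realType.
Implicit Types (S : set R) (b : R).

Lemma sup_ge0 S : (forall x, S x -> 0 <= x) -> has_ubound S -> 0 <= sup S.
Proof.
move=> S_ge0 S_ub; have [[x Sx]|S0] := pselect (S !=set0).
  exact: le_trans (S_ge0 x Sx) (ub_le_sup S_ub Sx).
by rewrite (_ : S = set0) ?sup0 //; apply/seteqP; split=> x // Sx; apply: S0; exists x.
Qed.

Lemma ge0_ge_sup S b : 0 <= b -> ubound S b -> sup S <= b.
Proof.
move=> b_ge0 S_b; have [S_neq0|S0] := pselect (S !=set0); first exact: ge_sup.
by rewrite (_ : S = set0) ?sup0 //; apply/seteqP; split=> x // Sx; apply: S0; exists x.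
Qed.

End RealSup.

Section RankOne.
Variables (R : realType) (isreal : bool) (n : nat).
Local Notation C := R[i].
Implicit Types (z : C) (u v f g : 'cV[C]_n) (T : 'M[C]_n).

Definition unit_vec : set 'cV[C]_n := [set v | inH isreal v /\ vnorm v = 1].

Lemma inHZ (x : R) v : inH isreal v -> inH isreal (x%:C *: v).
Proof.
move=> vH /vH v_real k; rewrite mxE; move: (v_real k).
by case: (v k ord0) => a b /= ->; rewrite mulr0 mul0r addr0.
Qed.

Lemma opnorm_le T b : 0 <= b ->
  (forall v, unit_vec v -> vnorm (T *m v) <= b) -> opnorm isreal T <= b.
Proof. by move=> b_ge0 Tb; apply: ge0_ge_sup => // _ [v vH <-]; apply: Tb. Qed.

Section Bounded.
Variables (T : 'M[C]_n) (b : R).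
Hypothesis Tb : forall v, unit_vec v -> vnorm (T *m v) <= b.

Let opnorm_ub : has_ubound [set vnorm (T *m v) | v in unit_vec].
Proof. by exists b => _ [v vH <-]; apply: Tb. Qed.

Lemma opnorm_ge v : unit_vec v -> vnorm (T *m v) <= opnorm isreal T.
Proof. by move=> vH; apply: (ub_le_sup opnorm_ub); exists v. Qed.

Lemma opnorm_ge0 : 0 <= opnorm isreal T.
Proof. by apply: sup_ge0 opnorm_ub => _ [v _ <-]; apply: vnorm_ge0. Qed.

End Bounded.

Lemma adjv_mul f v : adjv f *m v = (dotp v f)%:M.
Proof.
apply/matrixP => i j; rewrite (ord1 i) (ord1 j) !mxE /= mulr1n /dotp.
by apply: eq_bigr => k _; rewrite !mxE mulrC.
Qed.

Lemma rank1_mul z g f v : (z *: (g *m adjv f)) *m v = (z * dotp v f) *: g.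
Proof. by rewrite -scalemxAl -mulmxA adjv_mul mul_mx_scalar scalerA. Qed.

Lemma rank1_vnorm (q : R) g f v : 0 <= q ->
  vnorm ((q%:C *: (g *m adjv f)) *m v) = q * cmod (dotp v f) * vnorm g.
Proof. by move=> q_ge0; rewrite rank1_mul vnormZ cmodM cmodR ger0_norm. Qed.

Lemma rank1_unit_le (q : R) g f v : 0 <= q -> unit_vec v ->
  vnorm ((q%:C *: (g *m adjv f)) *m v) <= q * vnorm f * vnorm g.
Proof.
move=> q_ge0 [_ v1]; rewrite rank1_vnorm // ler_wpM2r ?vnorm_ge0 // ler_wpM2l //.
by rewrite -[vnorm f]mul1r -v1 cmod_dotp_le.
Qed.

Lemma rank1_opnorm_ge (q : R) g f : 0 <= q -> inH isreal g ->
  q * cmod (dotp g f) <= opnorm isreal (q%:C *: (g *m adjv f)).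
Proof.
move=> q_ge0 gH; have Tb := @rank1_unit_le q g f _ q_ge0.
have [g0|g_neq0] := eqVneq g 0; first by rewrite g0 dotp0l cmod0 mulr0 -g0 (opnorm_ge0 Tb).
have g_gt0 : 0 < vnorm g by rewrite lt_def vnorm_eq0 g_neq0 vnorm_ge0.
pose v := (vnorm g)^-1%:C *: g.
have vH : unit_vec v.
  by split; [exact: inHZ | rewrite vnormZ cmodR gtr0_norm ?invr_gt0 // mulVf ?gt_eqF].
apply: le_trans (opnorm_ge Tb vH); rewrite rank1_vnorm // dotpZl cmodM cmodR.
by rewrite gtr0_norm ?invr_gt0 // -mulrA mulrAC mulVf ?gt_eqF ?mul1r.
Qed.

Lemma rank1_eigenvalue z g f (l : C) v : v != 0 ->
  (z *: (g *m adjv f)) *m v = l *: v -> l = 0 \/ l = z * dotp g f.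
Proof.
move=> v_neq0; rewrite rank1_mul => Tv.
have [vf0|vf_neq0] := eqVneq (dotp v f) 0.
  left; move/esym/eqP: Tv; rewrite vf0 mulr0 scale0r scaler_eq0 (negbTE v_neq0).
  by rewrite orbF => /eqP.
right; apply: (mulIf vf_neq0).
by move/(congr1 (fun x => dotp x f)): Tv; rewrite !dotpZl => <-; rewrite mulrAC.
Qed.

Lemma rank1_specrad (q : R) g f : 0 <= q ->
  specrad (q%:C *: (g *m adjv f)) = q * cmod (dotp g f).
Proof.
move=> q_ge0; rewrite /specrad; set T := q%:C *: _; set S := (X in sup X).
set r := q * cmod (dotp g f); have r_ge0 : 0 <= r by rewrite mulr_ge0 ?cmod_ge0.
have S_le : ubound S r.
  move=> _ [l [v [v_neq0 Tv]] <-].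
  by case: (rank1_eigenvalue v_neq0 Tv) => ->; rewrite ?cmod0 // cmodM cmodR ger0_norm.
have S_ub : has_ubound S by exists r.
apply/eqP; rewrite eq_le ge0_ge_sup //=.
have [g0|g_neq0] := eqVneq g 0.
  by rewrite /r g0 dotp0l cmod0 mulr0 sup_ge0 // => _ [l _ <-]; apply: cmod_ge0.
apply: (ub_le_sup S_ub); exists (q%:C * dotp g f); last by rewrite cmodM cmodR ger0_norm.
by exists g; rewrite /T rank1_mul.
Qed.

End RankOne.

Section DualPairs.
Variables (R : realType) (isreal : bool) (n N : nat).
Local Notation C := R[i].
Implicit Types (F G H : 'I_N -> 'cV[C]_n) (f : 'cV[C]_n).

Definition mixed_op F G : 'M[C]_n := \sum_(i < N) G i *m adjv (F i).

Definition synthesis_mx G : 'M[C]_(n, N) := \matrix_(k, i) G i k ord0.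

Definition analysis_mx F : 'M[C]_(N, n) := \matrix_(i, k) conjc (F i k ord0).

Lemma mixed_opE F G f : \sum_(i < N) dotp f (F i) *: G i = mixed_op F G *m f.
Proof.
rewrite /mixed_op mulmx_suml; apply: eq_bigr => i _.
by rewrite -[G i *m _]scale1r rank1_mul mul1r.
Qed.

Lemma mixed_op_factor F G : mixed_op F G = synthesis_mx G *m analysis_mx F.
Proof.
apply/matrixP => a b; rewrite !mxE /mixed_op summxE; apply: eq_bigr => i _.
by rewrite !mxE big_ord1 !mxE.
Qed.

Lemma inH_delta k : inH isreal (delta_mx k 0 : 'cV[C]_n).
Proof. by move=> _ j; rewrite mxE; case: (_ && _). Qed.

Lemma dual_pair_mixed_op F G : is_dual_pair isreal F G -> mixed_op F G = 1%:M.
Proof.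
move=> [_ [_ recon]]; apply/matrixP => a b.
have [/(congr1 (fun v : 'cV[C]_n => v a 0)) + _] := recon _ (inH_delta b).
by rewrite mixed_opE -colE !mxE => <-; rewrite eqxx andbT.
Qed.

Lemma dual_pair_trace F G : is_dual_pair isreal F G ->
  \sum_(i < N) dotp (G i) (F i) = n%:R.
Proof.
move/dual_pair_mixed_op/(congr1 mxtrace); rewrite mxtrace1 /mixed_op raddf_sum => <-.
by apply: eq_bigr => i _; rewrite /= mxtrace_mulC adjv_mul mxtrace_scalar.
Qed.

Lemma dual_pair_dim_le F G : is_dual_pair isreal F G -> (n <= N)%N.
Proof.
move=> FG; have := mulmx_max_rank (synthesis_mx G) (analysis_mx F).
by rewrite -mixed_op_factor dual_pair_mixed_op // mxrank1.
Qed.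

Lemma parseval_dual_pair H : (forall i, inH isreal (H i)) -> mixed_op H H = 1%:M ->
  is_dual_pair isreal H H.
Proof.
move=> hH H1; have recon f : f = \sum_(i < N) dotp f (H i) *: H i.
  by rewrite mixed_opE H1 mul1mx.
have frame : is_frame isreal H.
  split=> //; exists 1, 1; do 2 split=> //; move=> f _.
  suff -> : frame_sum H f = vnorm f ^+ 2 by rewrite mul1r lexx.
  apply: (@complexI R); rewrite -dotpvv {2}[f]recon dotp_suml /frame_sum rmorph_sum.
  by apply: eq_bigr => i _; rewrite dotpZl -[dotp (H i) f]dotpJ; apply: sqr_cmod.
by do 2 split=> //; move=> f _; split; apply: recon.
Qed.

End DualPairs.

Lemma dual_pair_biorth (R : realType) (isreal : bool) (n : nat)
  (F G : 'I_n -> 'cV[R[i]]_n) : is_dual_pair isreal F G ->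
  forall i j, dotp (G i) (F j) = (i == j)%:R.
Proof.
move=> FG i j; move/dual_pair_mixed_op: FG; rewrite mixed_op_factor.
move=> /mulmx1C /matrixP /(_ j i); rewrite !mxE eq_sym => <-.
by apply: eq_bigr => k _; rewrite !mxE mulrC.
Qed.

Lemma convex_weight (R : realType) (K E a : R) : E <= a <= K \/ K <= a <= E ->
  exists2 g, 0 <= g <= 1 & g * K + (1 - g) * E = a.
Proof.
move=> a_between; wlog aEK : K E {a_between} / E <= a <= K => [wlog_aEK|].
  case: a_between => [/wlog_aEK //|/wlog_aEK [g g01 gE]].
  by exists (1 - g); [lra | rewrite -gE; ring].
have [KE|KE] := eqVneq K E.
  by exists 1; [rewrite lexx ler01 | rewrite subrr mul0r addr0 mul1r; lra].
have KE_gt0 : 0 < K - E by rewrite subr_gt0 lt_def KE /=; lra.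
exists ((a - E) / (K - E)); last by field; rewrite gt_eqF.
by rewrite divr_ge0 ?ler_pdivrMr ?mul1r ?subr_ge0; lra.
Qed.

Lemma rotation_outer_sum (S : comNzRingType) (d : nat) (c s : S)
  (k e : 'cV[S]_d) (k' e' : 'rV[S]_d) :
  (c *: k + s *: e) *m (c *: k' + s *: e') +
  (s *: k + (- c) *: e) *m (s *: k' + (- c) *: e') =
  (c * c + s * s) *: (k *m k' + e *m e').
Proof. by apply/matrixP => a b; rewrite !mxE !big_ord1 !mxE; ring. Qed.

Section ParsevalConstruction.
Variables (R : realType) (isreal : bool) (d : nat).
Local Notation C := R[i].
Implicit Types (x : R) (u v e k : 'cV[C]_d).

Definition supported_in (m : nat) v := forall j : 'I_d, (m <= j)%N -> v j ord0 = 0.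

Definition coord_proj (m : nat) : 'M[C]_d := \matrix_(i, j) ((i == j) && (i < m)%N)%:R.

Lemma coord_proj0 : coord_proj 0 = 0.
Proof. by apply/matrixP => i j; rewrite !mxE ltn0 andbF. Qed.

Lemma coord_projS (j : 'I_d) :
  coord_proj j.+1 = coord_proj j + delta_mx j 0 *m adjv (delta_mx j 0).
Proof.
apply/matrixP => a b; rewrite !mxE big_ord1 !mxE /= !andbT conjc_nat ltnS leq_eqVlt.
have [<-|ab] := eqVneq a b => /=.
  have [->|aj] := eqVneq a j; first by rewrite ltnn mulr1 add0r eqxx.
  by rewrite (negbTE (aj : val a != val j)) mulr0 addr0.
have [aj|_] := eqVneq a j; rewrite ?mul0r ?addr0 //.
have [bj|_] := eqVneq b j; rewrite ?mulr0 ?addr0 //.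
by case/eqP: ab; rewrite aj bj.
Qed.

Lemma coord_proj_dim : coord_proj d = 1%:M.
Proof. by apply/matrixP => i j; rewrite !mxE ltn_ord andbT. Qed.

Lemma supported_in0 m : supported_in m 0.
Proof. by move=> j _; rewrite mxE. Qed.

Lemma supported_inD m u v : supported_in m u -> supported_in m v -> supported_in m (u + v).
Proof. by move=> u0 v0 j mj; rewrite mxE u0 // v0 // addr0. Qed.

Lemma supported_inZ m z v : supported_in m v -> supported_in m (z *: v).
Proof. by move=> v0 j mj; rewrite mxE v0 // mulr0. Qed.

Lemma supported_inW m m' v : (m <= m')%N -> supported_in m v -> supported_in m' v.
Proof. by move=> mm' v0 j m'j; rewrite v0 // (leq_trans mm'). Qed.

Lemma supported_in_delta (j : 'I_d) : supported_in j.+1 (delta_mx j 0).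
Proof. by move=> k jk; rewrite mxE; case: eqP => // kj; rewrite -kj ltnn in jk. Qed.

Lemma inH0 : inH isreal (0 : 'cV[C]_d).
Proof. by move=> _ j; rewrite mxE. Qed.

Lemma inHD u v : inH isreal u -> inH isreal v -> inH isreal (u + v).
Proof.
move=> uH vH real j; rewrite mxE; move: (uH real j) (vH real j).
by case: (u j ord0) => ? ?; case: (v j ord0) => ? ? /= -> ->; rewrite addr0.
Qed.

Lemma dotp_delta v (j : 'I_d) : dotp v (delta_mx j 0) = v j ord0.
Proof.
rewrite /dotp (bigD1 j) //= big1 => [|i /negbTE ij]; rewrite !mxE ?eqxx ?ij conjc_nat.
  by rewrite mulr1 addr0.
by rewrite mulr0.
Qed.

Lemma sqr_vnorm_delta (j : 'I_d) : vnorm (delta_mx j 0 : 'cV[C]_d) ^+ 2 = 1.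
Proof. by apply: (@complexI R); rewrite -dotpvv dotp_delta mxE !eqxx. Qed.

Lemma sqr_vnorm_comb x x' k e : dotp k e = 0 ->
  vnorm (x%:C *: k + x'%:C *: e) ^+ 2 = x * x * vnorm k ^+ 2 + x' * x' * vnorm e ^+ 2.
Proof.
move=> ke; have ek : dotp e k = 0 by rewrite -dotpJ ke conjc0.
apply: (@complexI R); rewrite -dotpvv dotpDl !dotpDr !dotpZl !dotpZr ke ek !dotpvv.
by rewrite !conjc_real !rmorphD !rmorphM /=; ring.
Qed.

Lemma adjvD u v : adjv (u + v) = adjv u + adjv v.
Proof. by apply/matrixP => i j; rewrite !mxE rmorphD. Qed.

Lemma adjvZ z v : adjv (z *: v) = conjc z *: adjv v.
Proof. by apply/matrixP => i j; rewrite !mxE rmorphM. Qed.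

Lemma outer_rotation x x' k e : x * x + x' * x' = 1 ->
  (x%:C *: k + x'%:C *: e) *m adjv (x%:C *: k + x'%:C *: e) +
  (x'%:C *: k + (- x)%:C *: e) *m adjv (x'%:C *: k + (- x)%:C *: e) =
  k *m adjv k + e *m adjv e.
Proof.
move=> xx'.
have xx'C : x%:C * x%:C + x'%:C * x'%:C = 1 :> C.
  by rewrite -!(rmorphM (@real_complex R)) -(rmorphD (@real_complex R)) xx'.
rewrite -[RHS]scale1r -xx'C !adjvD !adjvZ !conjc_real (rmorphN (@real_complex R)) /=.
apply: rotation_outer_sum.
Qed.

Definition parseval_on (m : nat) (s : seq R) (hs : seq 'cV[C]_d) :=
  [/\ [seq vnorm h ^+ 2 | h <- hs] = s,
      {in hs, forall h, inH isreal h /\ supported_in m h} &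
      \sum_(h <- hs) h *m adjv h = coord_proj m].

(* Merge the leading squared norms a, a2 into b, adding the unit vector e of a new coordinate
   when a + a2 > 1; a rotation in the plane of the vector k of norm^2 b and e splits them back. *)
Lemma parseval_on_split m' m e b a a2 s k hs :
  (m' <= m)%N -> coord_proj m = coord_proj m' + e *m adjv e ->
  inH isreal e -> supported_in m e -> (forall v, supported_in m' v -> dotp v e = 0) ->
  vnorm e ^+ 2 <= a <= b \/ b <= a <= vnorm e ^+ 2 -> a + a2 = b + vnorm e ^+ 2 ->
  parseval_on m' (b :: s) (k :: hs) -> exists hs', parseval_on m (a :: a2 :: s) hs'.
Proof.
move=> m'm Pm eH e_supp e_orth a_between aa2 [[k_norm hs_norms] hs_supp hs_sum].
have [kH k_supp] := hs_supp k (mem_head _ _).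
rewrite -k_norm in a_between; have [g g01 gE] := convex_weight a_between.
have gg : Num.sqrt g * Num.sqrt g = g by rewrite -expr2 sqr_sqrtr; lra.
have g'g' : Num.sqrt (1 - g) * Num.sqrt (1 - g) = 1 - g by rewrite -expr2 sqr_sqrtr; lra.
have rot : Num.sqrt g * Num.sqrt g + Num.sqrt (1 - g) * Num.sqrt (1 - g) = 1.
  by rewrite gg g'g' addrC subrK.
have ke := e_orth k k_supp.
have uwH x x' : inH isreal (x%:C *: k + x'%:C *: e) /\ supported_in m (x%:C *: k + x'%:C *: e).
  split; first by apply: inHD; apply: inHZ.
  by apply: supported_inD; apply: supported_inZ => //; apply: supported_inW k_supp.
exists [:: (Num.sqrt g)%:C *: k + (Num.sqrt (1 - g))%:C *: e,
          (Num.sqrt (1 - g))%:C *: k + (- Num.sqrt g)%:C *: e & hs]; split.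
- congr [:: _, _ & _]; last exact: hs_norms.
    by rewrite sqr_vnorm_comb // gg g'g'.
  rewrite sqr_vnorm_comb // mulrNN gg g'g'.
  by apply: (@addrI _ a); rewrite aa2 -k_norm -gE; ring.
- move=> h; rewrite !in_cons => /or3P[/eqP->|/eqP->|h_hs]; try exact: uwH.
  have [hH h_supp] := hs_supp h (mem_behead (s := k :: hs) h_hs).
  by split=> //; apply: supported_inW h_supp.
- rewrite big_cons in hs_sum.
  by rewrite !big_cons addrA (outer_rotation k e rot) addrAC hs_sum Pm.
Qed.

Lemma parseval_on_single a m : (m <= d)%N -> a <= 1 -> a = m%:R ->
  exists hs, parseval_on m [:: a] hs.
Proof.
case: m => [|[|m]] md a_le1 am; last by move: a_le1; rewrite am lern1.
  exists [:: 0]; split; first by congr [:: _]; rewrite am vnorm0 expr0n.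
    by move=> h; rewrite inE => /eqP->; split; [apply: inH0 | apply: supported_in0].
  by rewrite big_cons big_nil mul0mx addr0 coord_proj0.
exists [:: delta_mx (Ordinal md) 0]; split; first by congr [:: _]; rewrite am sqr_vnorm_delta.
  move=> h; rewrite inE => /eqP->.
  by split; [apply: inH_delta | exact: (supported_in_delta (j := Ordinal md))].
by rewrite big_cons big_nil addr0 (coord_projS (Ordinal md)) coord_proj0 add0r.
Qed.

Lemma parseval_on_cons a s m : (m <= d)%N -> all (fun x => 0 <= x <= 1) (a :: s) ->
  a + \sum_(x <- s) x = m%:R -> exists hs, parseval_on m (a :: s) hs.
Proof.
elim: s a m => [|a2 s IH] a m md.
  by rewrite /= andbT big_nil addr0 => /andP[_ a_le1]; apply: parseval_on_single.
rewrite /= => /and3P[a01 a201 s01]; rewrite big_cons addrA => sum.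
have s_ge0 : 0 <= \sum_(x <- s) x.
  by rewrite big_seq sumr_ge0 // => x /(allP s01) /andP[].
have [le1|gt1] := leP (a + a2) 1.
  have b01 : all (fun x => 0 <= x <= 1) (a + a2 :: s) by rewrite /= s01 andbT; lra.
  have [[|k hs] P] := IH (a + a2) m md b01 sum; first by case: P.
  apply: (parseval_on_split (e := 0) (leqnn m) _ _ _ _ _ _ P).
  - by rewrite mul0mx addr0.
  - exact: inH0.
  - exact: supported_in0.
  - by move=> v _; rewrite dotp0r.
  - by left; rewrite vnorm0 expr0n /=; lra.
  - by rewrite vnorm0 expr0n addr0.
case: m md sum => [|m] md sum; first by lra.
have b01 : all (fun x => 0 <= x <= 1) (a + a2 - 1 :: s) by rewrite /= s01 andbT; lra.
have b_sum : a + a2 - 1 + \sum_(x <- s) x = m%:R by rewrite addrAC sum -natr1 addrK.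
have [[|k hs] P] := IH (a + a2 - 1) m (ltnW md) b01 b_sum; first by case: P.
apply: (parseval_on_split (e := delta_mx (Ordinal md) 0) (leqnSn m) _ _ _ _ _ _ P).
- exact: (coord_projS (Ordinal md)).
- exact: inH_delta.
- exact: (supported_in_delta (j := Ordinal md)).
- by move=> v v_supp; rewrite dotp_delta v_supp.
- by right; rewrite sqr_vnorm_delta; lra.
- by rewrite sqr_vnorm_delta subrK.
Qed.

Lemma parseval_on_exists s m : (m <= d)%N -> all (fun x => 0 <= x <= 1) s ->
  \sum_(x <- s) x = m%:R -> exists hs, parseval_on m s hs.
Proof.
case: s => [|a s] md; last by rewrite big_cons; apply: parseval_on_cons.
move=> _; rewrite big_nil => /esym/eqP; rewrite pnatr_eq0 => /eqP->.
by exists [::]; split; rewrite // big_nil coord_proj0.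
Qed.

End ParsevalConstruction.

Lemma parseval_frame_exists (R : realType) (isreal : bool) (d N : nat) (a : 'I_N -> R) :
  (forall i, 0 <= a i <= 1) -> \sum_(i < N) a i = d%:R ->
  exists H : 'I_N -> 'cV[R[i]]_d, [/\ forall i, inH isreal (H i),
    forall i, vnorm (H i) ^+ 2 = a i & mixed_op H H = 1%:M].
Proof.
move=> a01 a_sum; pose s := [seq a i | i <- enum 'I_N].
have s01 : all (fun x => 0 <= x <= 1) s by apply/allP => _ /mapP[i _ ->].
have s_sum : \sum_(x <- s) x = d%:R by rewrite big_map big_enum.
have [hs [hs_norms hs_supp hs_sum]] := parseval_on_exists isreal (leqnn d) s01 s_sum.
have hs_size : size hs = N.
  by move/(congr1 size): hs_norms; rewrite !size_map -enumT size_enum_ord.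
have hs_mem (i : 'I_N) : nth 0 hs i \in hs by rewrite mem_nth ?hs_size.
exists (nth 0 hs); split.
- by move=> i; case: (hs_supp _ (hs_mem i)).
- move=> i; move/(congr1 (fun t => nth 0 t i)): hs_norms.
  by rewrite (nth_map 0) ?hs_size // (nth_map i) ?size_enum_ord // nth_ord_enum.
- rewrite /mixed_op -coord_proj_dim -hs_sum (big_nth 0) hs_size big_mkord.
  by apply: eq_bigr.
Qed.

Section OneErasure.
Variables (R : realType) (isreal : bool) (n N : nat).
Local Notation C := R[i].
Implicit Types (F G : 'I_N -> 'cV[C]_n) (q : 'I_N -> R).

Lemma err_op1 q F G i : err_op q F G [set i] = (q i)%:C *: (G i *m adjv (F i)).
Proof. by rewrite /err_op big_set1. Qed.

Lemma O1_ge0 q F G : 0 <= O1 isreal q F G.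
Proof. exact: bigmax_ge_id. Qed.

Lemma O1_le q F G b : 0 <= b ->
  (forall i, opnorm isreal (err_op q F G [set i]) <= b) -> O1 isreal q F G <= b.
Proof. by move=> b_ge0 Eb; apply/bigmax_leP; split=> // L /cards1P[i ->]. Qed.

Lemma le_O1 q F G i : opnorm isreal (err_op q F G [set i]) <= O1 isreal q F G.
Proof. by rewrite /O1 (bigD1 [set i]%SET) ?cards1 //= le_max lexx. Qed.

Lemma le_A1 q F G i :
  (opnorm isreal (err_op q F G [set i]) + specrad (err_op q F G [set i])) / 2
  <= A1 isreal q F G.
Proof. by rewrite /A1 (bigD1 [set i]%SET) ?cards1 //= le_max lexx. Qed.

Lemma A1_ge0 q F G : 0 <= A1 isreal q F G.
Proof. exact: bigmax_ge_id. Qed.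

Lemma specrad_err_op1 q F G i : 0 <= q i ->
  specrad (err_op q F G [set i]) = q i * cmod (dotp (G i) (F i)).
Proof. by move=> q_ge0; rewrite err_op1 rank1_specrad. Qed.

Lemma specrad_err_op1_le q F G i : 0 <= q i -> is_dual_pair isreal F G ->
  specrad (err_op q F G [set i]) <= opnorm isreal (err_op q F G [set i]).
Proof.
move=> q_ge0 [_ [[GH _] _]].
by rewrite specrad_err_op1 // err_op1; apply: rank1_opnorm_ge.
Qed.

Lemma A1_le_O1 q F G : (forall i, 0 <= q i) -> is_dual_pair isreal F G ->
  A1 isreal q F G <= O1 isreal q F G.
Proof.
move=> q_ge0 FG; apply/bigmax_leP; split=> [|L /cards1P[i ->]]; first exact: O1_ge0.
apply: le_trans (le_O1 q F G i); rewrite ler_pdivrMr // mulr2n mulrDr mulr1 lerD2l.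
exact: specrad_err_op1_le.
Qed.

Lemma weighted_dotp_le_A1 q F G i : 0 <= q i -> is_dual_pair isreal F G ->
  q i * cmod (dotp (G i) (F i)) <= A1 isreal q F G.
Proof.
move=> q_ge0 FG; apply: le_trans (le_A1 q F G i).
rewrite -specrad_err_op1 // ler_pdivlMr // mulr2n mulrDr mulr1 lerD2r.
exact: specrad_err_op1_le.
Qed.

Lemma inf_image_eq (T : Type) (S : set T) (f : T -> R) c :
  (forall x, S x -> c <= f x) -> (exists2 x, S x & f x <= c) -> inf (f @` S) = c.
Proof.
move=> f_ge [x Sx fx_le]; apply/eqP; rewrite eq_le; apply/andP; split.
  by apply: le_trans fx_le; apply: ge_inf; [exists c => _ [y Sy <-]; apply: f_ge | exists x].
by apply: lb_le_inf; [exists (f x), x | move=> _ [y Sy <-]; apply: f_ge].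
Qed.

Lemma optimal_values q c : (forall i, 0 <= q i) ->
  (forall F G, is_dual_pair isreal F G -> c <= A1 isreal q F G) ->
  (exists F G, is_dual_pair isreal F G /\ O1 isreal q F G <= c) ->
  O1_opt isreal n q = c /\ A1_opt isreal n q = c.
Proof.
move=> q_ge0 A1_ge [F0 [G0 [FG0 O0_le]]]; split; apply: inf_image_eq.
- move=> [F G] /= FG; exact: le_trans (A1_ge _ _ FG) (A1_le_O1 q_ge0 FG).
- by exists (F0, G0).
- by move=> [F G] /= FG; apply: A1_ge.
- by exists (F0, G0) => //=; apply: le_trans (A1_le_O1 q_ge0 FG0) O0_le.
Qed.

Lemma POD1_iff_PASOD1 q c F G : (forall i, 0 <= q i) ->
  (forall F G, is_dual_pair isreal F G -> c <= A1 isreal q F G) ->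
  (is_dual_pair isreal F G -> exists F0 G0, is_dual_pair isreal F0 G0 /\ O1 isreal q F0 G0 <= c) ->
  (is_dual_pair isreal F G -> A1 isreal q F G <= c -> O1 isreal q F G <= c) ->
  is_POD1 isreal q F G <-> is_PASOD1 isreal q F G.
Proof.
move=> q_ge0 A1_ge optimal A1_O1; split=> -[FG opt]; split=> //;
  have [O_opt A_opt] := optimal_values q_ge0 A1_ge (optimal FG).
  by rewrite A_opt; apply/eqP; rewrite eq_le A1_ge // -O_opt -opt A1_le_O1.
rewrite O_opt; apply/eqP; rewrite eq_le A1_O1 ?opt ?A_opt //=.
by rewrite -A_opt -opt A1_le_O1.
Qed.

End OneErasure.

Section Regimes.
Variables (R : realType) (isreal : bool) (n N : nat) (q : 'I_N -> R).
Local Notation C := R[i].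
Implicit Types (F G : 'I_N -> 'cV[C]_n).
Hypothesis q_ge0 : forall i, 0 <= q i.

Lemma parseval_pair_O1_le (a : 'I_N -> R) c : (forall i, 0 <= a i <= 1) ->
  \sum_(i < N) a i = n%:R -> 0 <= c -> (forall i, q i * a i <= c) ->
  exists F G, is_dual_pair isreal F G /\ O1 isreal q F G <= c.
Proof.
move=> a01 a_sum c_ge0 qa_le.
have [H [HH H_norm H1]] := parseval_frame_exists isreal a01 a_sum.
exists H, H; split; first exact: parseval_dual_pair.
apply: O1_le => // i; rewrite err_op1; apply: opnorm_le => // v v_unit.
apply: le_trans (rank1_unit_le (H i) (H i) (q_ge0 i) v_unit) _.
by rewrite -mulrA -expr2 H_norm.
Qed.

Section Overcomplete.
Hypothesis q_gt0 : forall i, 0 < q i.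
Hypothesis q_inv_sum : \sum_(i < N) (q i)^-1 = n%:R.

Lemma cmod_dotp_le_A1_div F G i : is_dual_pair isreal F G ->
  cmod (dotp (G i) (F i)) <= A1 isreal q F G / q i.
Proof. by move=> FG; rewrite ler_pdivlMr // mulrC; apply: weighted_dotp_le_A1 (q_ge0 i) FG. Qed.

Lemma A1_ge1 F G : (0 < n)%N -> is_dual_pair isreal F G -> 1 <= A1 isreal q F G.
Proof.
move=> n_gt0 FG; rewrite -(@ler_pM2r _ n%:R) ?ltr0n // mul1r.
rewrite -{1}(cmod_nat R n) -(dual_pair_trace FG) -q_inv_sum mulr_sumr.
apply: le_trans (cmod_sum _ _ _) _; apply: ler_sum => i _.
exact: cmod_dotp_le_A1_div.
Qed.

Lemma O1_le1 F G : is_dual_pair isreal F G -> A1 isreal q F G <= 1 -> O1 isreal q F G <= 1.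
Proof.
move=> FG A1_le1.
have dotp_le i : cmod (dotp (G i) (F i)) <= (q i)^-1.
  apply: le_trans (cmod_dotp_le_A1_div i FG) _.
  by rewrite -[X in _ <= X]mul1r ler_wpM2r ?invr_ge0.
(* the trace identity forces equality in every bound |<g_i, f_i>| <= 1/q_i *)
have dotp_eq i : cmod (dotp (G i) (F i)) = (q i)^-1.
  have gap_ge0 j : true -> 0 <= (q j)^-1 - cmod (dotp (G j) (F j)) by rewrite subr_ge0.
  suff /(psumr_eq0P gap_ge0)/(_ i isT)/eqP : \sum_(j < N) ((q j)^-1 - cmod (dotp (G j) (F j))) = 0.
    by rewrite subr_eq0 => /eqP.
  apply/eqP; rewrite eq_le sumr_ge0 // andbT sumrB q_inv_sum subr_le0.
  by rewrite -(cmod_nat R n) -(dual_pair_trace FG) cmod_sum.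
apply: O1_le => // i; have := le_trans (le_A1 isreal q F G i) A1_le1.
rewrite (specrad_err_op1 _ _ (q_ge0 i)) dotp_eq mulfV ?gt_eqF // ler_pdivrMr //; lra.
Qed.

Lemma POD1_iff_PASOD1_overcomplete F G : (0 < n)%N -> N != n ->
  ((n < N)%N -> forall i, (q i)^-1 <= 1) ->
  is_POD1 isreal q F G <-> is_PASOD1 isreal q F G.
Proof.
move=> n_gt0 Nn q_inv_le1; apply: (POD1_iff_PASOD1 (c := 1)) => // [F' G'|FG|FG].
- exact: A1_ge1.
- have n_lt_N : (n < N)%N by rewrite ltn_neqAle eq_sym Nn (dual_pair_dim_le FG).
  apply: (parseval_pair_O1_le (a := fun i => (q i)^-1)) => // [i|i].
    by rewrite invr_ge0 q_ge0 q_inv_le1.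
  by rewrite mulfV ?gt_eqF.
- exact: O1_le1.
Qed.

End Overcomplete.
End Regimes.

Lemma tight_frameP (R : realType) (isreal : bool) (n N : nat) (F : 'I_N -> 'cV[R[i]]_n) :
  is_tight_frame isreal F ->
  exists2 A, 0 < A & forall f, inH isreal f -> frame_sum F f = A * vnorm f ^+ 2.
Proof.
move=> [_ [A [A_gt0 FA]]]; exists A => // f /FA[A_le le_A].
by apply/eqP; rewrite eq_le A_le le_A.
Qed.

Section Square.
Variables (R : realType) (isreal : bool) (n : nat) (q : 'I_n -> R).
Local Notation C := R[i].
Implicit Types (F G : 'I_n -> 'cV[C]_n).
Hypothesis q_ge0 : forall i, 0 <= q i.

Lemma A1_ge_max_weight F G : is_dual_pair isreal F G ->
  \big[Num.max/0]_i q i <= A1 isreal q F G.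
Proof.
move=> FG; apply/bigmax_leP; split=> [|i _]; first exact: A1_ge0.
by have := weighted_dotp_le_A1 (q_ge0 i) FG; rewrite (dual_pair_biorth FG) eqxx cmod_nat mulr1.
Qed.

Lemma O1_le_max_weight F G : is_tight_frame isreal F -> is_dual_pair isreal F G ->
  O1 isreal q F G <= \big[Num.max/0]_i q i.
Proof.
move=> /tight_frameP[A A_gt0 FA] FG; have [_ [[GH _] _]] := FG.
(* biorthogonality turns frame_sum F (g i) into 1 *)
have Ag i : A * vnorm (G i) ^+ 2 = 1.
  rewrite -FA // /frame_sum (bigD1 i) //= big1 => [|j /negbTE ji].
    by rewrite (dual_pair_biorth FG) eqxx cmod_nat expr1n addr0.
  by rewrite (dual_pair_biorth FG) eq_sym ji cmod_nat expr0n.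
apply: O1_le => [|i]; first exact: bigmax_ge_id.
rewrite err_op1; apply: opnorm_le => [|v [vH v1]]; first exact: bigmax_ge_id.
rewrite rank1_vnorm // -mulrA; apply: le_trans (le_bigmax _ _ i).
rewrite ler_piMr // -(expr_le1 (n := 2)) ?mulr_ge0 ?cmod_ge0 ?vnorm_ge0 // exprMn -(Ag i).
rewrite ler_wpM2r ?sqr_ge0 // -[A]mulr1 -(expr1n _ 2) -v1 -FA //.
by rewrite /frame_sum (bigD1 i) //= lerDl sumr_ge0 // => j _; apply: sqr_ge0.
Qed.

Lemma POD1_iff_PASOD1_tight_square F G : is_tight_frame isreal F ->
  is_POD1 isreal q F G <-> is_PASOD1 isreal q F G.
Proof.
move=> F_tight; apply: (POD1_iff_PASOD1 (c := \big[Num.max/0]_i q i)) => // [F' G'|_|FG _].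
- exact: A1_ge_max_weight.
- apply: (parseval_pair_O1_le isreal q_ge0 (a := fun=> 1)) => [i|||i].
  + by rewrite lexx ler01.
  + by rewrite sumr_const card_ord.
  + exact: bigmax_ge_id.
  + by rewrite mulr1 le_bigmax.
- exact: O1_le_max_weight.
Qed.

End Square.

Lemma O1_dim0 (R : realType) (isreal : bool) (N : nat) (q : 'I_N -> R)
  (F G : 'I_N -> 'cV[R[i]]_0) : O1 isreal q F G <= 0.
Proof.
apply: O1_le => // i; apply: opnorm_le => // v [_].
by rewrite /vnorm big_ord0 sqrtr0 => /eqP; rewrite eq_sym oner_eq0.
Qed.

Lemma POD1_iff_PASOD1_dim0 (R : realType) (isreal : bool) (N : nat) (q : 'I_N -> R)
  (F G : 'I_N -> 'cV[R[i]]_0) : (forall i, 0 <= q i) ->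
  is_POD1 isreal q F G <-> is_PASOD1 isreal q F G.
Proof.
move=> q_ge0; apply: (POD1_iff_PASOD1 (c := 0)) => // [F' G' _|_|_ _].
- exact: A1_ge0.
- apply: (parseval_pair_O1_le isreal q_ge0 (a := fun=> 0)) => [i|||i].
  + by rewrite lexx ler01.
  + by rewrite big1_eq.
  + by [].
  + by rewrite mulr0.
- exact: O1_dim0.
Qed.

Section Weights.
Variables (R : realType) (n N : nat) (p : 'I_N -> R).
Hypothesis p_prob : is_prob_seq p.
Hypothesis p_lt1 : forall i, p i < 1.

Lemma prob_seq_size_gt1 : (1 < N)%N.
Proof.
case: N p p_prob p_lt1 => [|[|N']] p' [_ p'_sum] p'_lt1 //.
  by move: p'_sum; rewrite big_ord0 => /eqP; rewrite eq_sym oner_eq0.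
by move: p'_sum (p'_lt1 ord0); rewrite big_ord1 => ->; rewrite ltxx.
Qed.

Let N1_gt0 : 0 < N%:R - 1 :> R.
Proof. by rewrite subr_gt0 ltr1n prob_seq_size_gt1. Qed.

Lemma weightE i : weight n p i = (1 - p i)^-1 * ((N%:R - 1) / n%:R).
Proof. by rewrite /weight p_prob.2 div1r. Qed.

Lemma weight_gt0 i : (0 < n)%N -> 0 < weight n p i.
Proof.
by move=> n_gt0; rewrite weightE mulr_gt0 ?divr_gt0 ?N1_gt0 ?ltr0n ?invr_gt0 ?subr_gt0 ?p_lt1.
Qed.

Lemma weight_ge0 i : 0 <= weight n p i.
Proof.
have [n0|n_gt0] := posnP n; last exact/ltW/weight_gt0.
by rewrite /weight n0 invr0 !mulr0.
Qed.

Lemma weight_inv i : (weight n p i)^-1 = (1 - p i) * (n%:R / (N%:R - 1)).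
Proof. by rewrite weightE invfM invrK invf_div. Qed.

Lemma weight_inv_sum : \sum_(i < N) (weight n p i)^-1 = n%:R.
Proof.
under eq_bigr do rewrite weight_inv.
by rewrite -mulr_suml sumrB sumr_const card_ord p_prob.2 mulrCA divff ?mulr1 // gt_eqF.
Qed.

Lemma weight_inv_le1 i : (n < N)%N -> (weight n p i)^-1 <= 1.
Proof.
move=> n_lt_N; have [p_ge0 _] := p_prob.1 i.
have n_N1_le1 : n%:R / (N%:R - 1) <= 1 :> R.
  by rewrite ler_pdivrMr // mul1r lerBrDr natr1 ler_nat.
rewrite weight_inv mulr_ile1 // ?divr_ge0 ?ler0n ?(ltW N1_gt0) //; last by rewrite gerBl.
by rewrite subr_ge0 ltW.
Qed.

End Weights.

Theorem theorem4p3 (R : realType) (isreal : bool) (n N : nat)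
  (F : 'I_N -> 'cV[R[i]]_n) (p : 'I_N -> R) :
  is_tight_frame isreal F ->
  is_prob_seq p ->
  (forall i, p i < 1) ->
  (is_POD1 isreal (weight n p) F (canon_dual F) <->
   @zeta1 R isreal n N (weight n p) (F, canon_dual F)).
Proof.
move=> F_tight p_prob p_lt1.
change (is_POD1 isreal (weight n p) F (canon_dual F) <->
        is_PASOD1 isreal (weight n p) F (canon_dual F)).
have q_ge0 := weight_ge0 n p_prob p_lt1.
have [n0|n_gt0] := posnP n; first by subst n; apply: POD1_iff_PASOD1_dim0.
have [NnE|Nn] := eqVneq N n; first by subst N; apply: POD1_iff_PASOD1_tight_square.
apply: POD1_iff_PASOD1_overcomplete => // [i||n_lt_N i].
- exact: weight_gt0.
- exact: weight_inv_sum.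
- exact: weight_inv_le1.
Qed.
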